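(* In the acoustic setting, suppose $A<0$ on $[\rho_-,\rho_+]$, $A^2+B^2=1$ at $\rho_\pm$ and $A^2+B^2>1$ on $(\rho_-,\rho_+)$, $A(\rho)=-1$ exactly at $\rho_1<\rho_2$ in $(\rho_-,\rho_+)$ with $A<-1$ on $(\rho_1,\rho_2)$, and there is $\rho_0\in(\rho_1,\rho_2)$ with $B>0$ on $[\rho_-,\rho_0)$, $B(\rho_0)=0$, $B<0$ on $(\rho_0,\rho_+]$. Then $d\rho^+/dt>0$ on $(\rho_-,\rho_1)$ and $d\rho^+/dt<0$ on $(\rho_1,\rho_+)$ (so the $(+)$ family starts on both ergospheres $\rho=\rho_-$ and $\rho=\rho_+$), and $d\varphi^+/dt=B(\rho_1)/\rho_1>0$ at $\rho=\rho_1$. Consequently every $(+)$ trajectory in the ergoregion satisfies $\rho^+(t)\to\rho_1$ as $t\to+\infty$, approaching the horizon $\rho=\rho_1$, which is traversed counterclockwise.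
   Context: Acoustic metric in the plane with polar coordinates $(\rho,\varphi)$: Hamiltonian $H=(\tau+A\xi_\rho+B\xi_\varphi/\rho)^2-\xi_\rho^2-(\xi_\varphi/\rho)^2$, $A=A(\rho)$, $B=B(\rho)$ smooth. The ergoregion is the annulus $\rho_-<\rho<\rho_+$ where $A^2+B^2>1$. Zero-energy null geodesics are the null bicharacteristics with $\tau=0$ parametrized by $t$; the sign in $\xi_\rho=\frac{-AB\pm\sqrt{A^2+B^2-1}}{A^2-1}\,\xi_\varphi/\rho$ defines the $(\pm)$ family. With $s=\sqrt{A^2+B^2-1}$, the equations of motion in the ergoregion are $$\frac{d\rho^\pm}{dt}=\frac{A(A^2+B^2-1)\pm Bs}{A^2+B^2},\qquad \frac{d\varphi^\pm}{dt}=\frac{s\,(Bs\mp A)}{\rho\,(A^2+B^2)}.$$ A horizon of the $(\pm)$ family is a circle $\{\rho=c\}$ in the ergoregion which is a closed trajectory of that family. *)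

From Stdlib Require Export Reals.
Open Scope R_scope.

Definition sfun (A B : R -> R) (r : R) : R := sqrt (A r ^ 2 + B r ^ 2 - 1).

Definition drho_plus (A B : R -> R) (r : R) : R :=
  (A r * (A r ^ 2 + B r ^ 2 - 1) + B r * sfun A B r) / (A r ^ 2 + B r ^ 2).

Definition dphi_plus (A B : R -> R) (r : R) : R :=
  sfun A B r * (B r * sfun A B r - A r) / (r * (A r ^ 2 + B r ^ 2)).

(* (rho, phi) is a (+) zero-energy null geodesic at all times t with P t. *)
Definition plus_traj_on (A B : R -> R) (P : R -> Prop) (rho phi : R -> R) : Prop :=
  forall t, P t ->
    derivable_pt_lim rho t (drho_plus A B (rho t)) /\
    derivable_pt_lim phi t (dphi_plus A B (rho t)).

(* A horizon of the (+) family: a circle {rho = c} in the ergoregion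
   (rm, rp) which is a closed trajectory of that family: the constant
   radius c together with some angle function solves the (+) equations for
   all times and the angle sweeps a full turn. *)
Definition horizon_plus (A B : R -> R) (rm rp c : R) : Prop :=
  rm < c < rp /\
  exists phi : R -> R,
    plus_traj_on A B (fun _ => True) (fun _ => c) phi /\
    exists T, 0 < T /\ Rabs (phi T - phi 0) = 2 * PI.

(* In the ergoregion the radial velocity of the (+) family factors as
   s (A s + B) / (A^2 + B^2) with s = sqrt (A^2 + B^2 - 1), and
   (B + A s)(B - A s) = (1 - A^2)(A^2 + B^2).  Since A < 0, the factor
   B - A s is positive when B > 0, so d rho+/dt has the sign of 1 - A^2 where
   B > 0 and is negative where B <= 0: it is positive on (rho-, rho1), where
   -1 < A < 0 < B, and negative on (rho1, rho+).  At rho1 we have A = -1 and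
   s = B, so the circle is a rest point of the radial equation, swept with
   angular speed B/rho1 > 0.  The radial equation is an autonomous scalar ODE
   with the single attracting rest point rho1, hence every trajectory tends
   to it. *)

From Stdlib Require Import Reals Ranalysis5 Lra Classical.
From Coquelicot Require Import Coquelicot.
Open Scope R_scope.

Lemma nondecreasing_of_deriv_nonneg (h h' : R -> R) :
  (forall t, 0 <= t -> derivable_pt_lim h t (h' t)) ->
  (forall t, 0 <= t -> 0 <= h' t) ->
  forall a b, 0 <= a <= b -> h a <= h b.
Proof.
intros hd hpos a b [ha hab].
destruct (Req_dec a b) as [<-|hne]; [lra|].
destruct (MVT_cor2 h h' a b) as [c [hc hcab]]; [lra| intros c hc; apply hd; lra |].
assert (0 <= h' c) by (apply hpos; lra).
nra.
Qed.

Lemma sup_of_bounded_on_nonneg (g : R -> R) (M : R) :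
  (forall t, 0 <= t -> g t <= M) ->
  exists L, (forall t, 0 <= t -> g t <= L) /\
            (forall e, 0 < e -> exists t, 0 <= t /\ L - e < g t).
Proof.
intros hM.
destruct (completeness (fun x => exists t, 0 <= t /\ x = g t)) as [L [hub hlub]].
- exists M. intros x [t [ht ->]]. auto.
- exists (g 0), 0. split; [lra | reflexivity].
- exists L. split.
  + intros t ht. apply hub. exists t. auto.
  + intros e he. apply NNPP. intros hno.
    assert (L <= L - e); [|lra].
    apply hlub. intros x [t [ht ->]].
    apply Rnot_lt_le. intros hlt. apply hno. exists t. auto.
Qed.

(* Near a point L where F > 0 the solution moves up at a uniform speed, so it
   cannot creep up to L without crossing it. *)
Lemma ode_stays_away_below (g F : R -> R) (L : R) :
  (forall t, 0 <= t -> derivable_pt_lim g t (F (g t))) ->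
  (forall a b, 0 <= a <= b -> g a <= g b) ->
  (forall t, 0 <= t -> g t <= L) ->
  0 < F L -> continuity_pt F L ->
  exists d, 0 < d /\ forall t, 0 <= t -> g t <= L - d.
Proof.
intros hd hmono hL hFL hcont.
destruct (hcont (F L / 2)) as [d [hd0 hnear]]; [lra|].
simpl in hnear; unfold R_dist in hnear.
assert (hFnear : forall x, Rabs (x - L) < d -> F L / 2 < F x).
{ intros x hx. destruct (Req_dec x L) as [->|hne]; [lra|].
  assert (hdist : Rabs (F x - F L) < F L / 2) by (apply hnear; repeat split; auto).
  apply Rabs_def2 in hdist. lra. }
exists d. split; [exact hd0|]. intros t0 ht0.
destruct (Rle_or_lt (g t0) (L - d)) as [hle|hgt]; [exact hle|exfalso].
set (t1 := t0 + 4 * d / F L).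
assert (ht01 : t0 < t1) by (unfold t1; assert (0 < 4 * d / F L) by (apply Rdiv_lt_0_compat; lra); lra).
destruct (MVT_cor2 g (fun t => F (g t)) t0 t1) as [c [hc hcab]];
  [lra | intros c hc; apply hd; lra |].
assert (g t0 <= g c) by (apply hmono; lra).
assert (g c <= L) by (apply hL; lra).
assert (g t1 <= L) by (apply hL; lra).
assert (F L / 2 < F (g c)) by (apply hFnear; rewrite Rabs_left1; lra).
assert (F L / 2 * (t1 - t0) = 2 * d) by (unfold t1; field; lra).
nra.
Qed.

Lemma ode_cvg_from_below (g F : R -> R) (a c : R) :
  (forall t, 0 <= t -> derivable_pt_lim g t (F (g t))) ->
  (forall t, 0 <= t -> a < g t <= c) ->
  (forall x, a < x < c -> 0 < F x /\ continuity_pt F x) ->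
  F c = 0 ->
  forall eps, 0 < eps -> exists T, forall t, t >= T -> Rabs (g t - c) < eps.
Proof.
intros hd hrange hF hFc eps heps.
assert (hmono : forall s t, 0 <= s <= t -> g s <= g t).
{ apply (nondecreasing_of_deriv_nonneg g (fun t => F (g t)) hd).
  intros t ht. destruct (hrange t ht) as [hat hct].
  destruct (Req_dec (g t) c) as [->|hne]; [lra|].
  apply Rlt_le, hF. lra. }
destruct (sup_of_bounded_on_nonneg g c) as [L [hub happrox]].
{ intros t ht. apply hrange, ht. }
assert (hLc : L = c).
{ destruct (Rtotal_order L c) as [hlt|[heq|hgt]]; [exfalso| exact heq | exfalso].
  - assert (a < L) by (destruct (hrange 0 (Rle_refl 0)); specialize (hub 0 (Rle_refl 0)); lra).
    destruct (hF L) as [hFL hcont]; [lra|].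
    destruct (ode_stays_away_below g F L hd hmono hub hFL hcont) as [d [hd0 hbelow]].
    destruct (happrox d hd0) as [t [ht hgt]].
    specialize (hbelow t ht). lra.
  - destruct (happrox (L - c)) as [t [ht hgt']]; [lra|].
    destruct (hrange t ht). lra. }
subst L.
destruct (happrox eps heps) as [t0 [ht0 hgt0]].
exists t0. intros t ht.
assert (g t0 <= g t) by (apply hmono; lra).
destruct (hrange t); [lra|].
rewrite Rabs_left1; lra.
Qed.

Lemma sqr_dist_noninc (g F : R -> R) (a b c : R) :
  (forall t, 0 <= t -> derivable_pt_lim g t (F (g t))) ->
  (forall t, 0 <= t -> a < g t < b) ->
  (forall x, a < x < b -> (x - c) * F x <= 0) ->
  forall s t, 0 <= s <= t -> (g t - c) ^ 2 <= (g s - c) ^ 2.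
Proof.
intros hd hrange hsign s t hst.
cut (- (g s - c) ^ 2 <= - (g t - c) ^ 2); [lra|].
apply (nondecreasing_of_deriv_nonneg (fun u => - (g u - c) ^ 2)
         (fun u => - (2 * (g u - c) * F (g u)))); [| |exact hst].
- intros u hu.
  apply derivable_pt_lim_opp.
  pose proof (derivable_pt_lim_minus g (fct_cte c) u _ _ (hd u hu) (derivable_pt_lim_const c u)) as hdiff.
  pose proof (derivable_pt_lim_comp (fun u => g u - c) (fun x => x ^ 2) u _ _ hdiff (derivable_pt_lim_pow (g u - c) 2)) as hsq.
  unfold comp in hsq. cbv beta in hsq.
  replace (2 * (g u - c) * F (g u)) with (INR 2 * (g u - c) ^ Nat.pred 2 * (F (g u) - 0)) by (simpl; ring).
  exact hsq.
- intros u hu. assert (hs := hsign (g u) (hrange u hu)). lra.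
Qed.

Lemma stays_below_of_sqr_dist_noninc (g : R -> R) (c : R) :
  (forall t, 0 <= t -> continuity_pt g t) ->
  (forall s t, 0 <= s <= t -> (g t - c) ^ 2 <= (g s - c) ^ 2) ->
  g 0 <= c -> forall t, 0 <= t -> g t <= c.
Proof.
intros hcont hnon h0 t ht.
apply Rnot_lt_le. intros hgt.
assert (hz : exists z, 0 <= z <= t /\ g z = c).
{ destruct (Req_dec (g 0) c) as [heq|hne]; [exists 0; split; [lra | exact heq]|].
  destruct (IVT_interv (fun u => g u - c) 0 t) as [z [hz hgz]].
  - intros u hu. apply continuity_pt_minus; [apply hcont; lra | apply continuity_pt_const; intros ? ?; reflexivity].
  - destruct (Req_dec t 0) as [->|]; lra.
  - lra.
  - lra.
  - exists z. split; [exact hz | lra]. }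
destruct hz as [z [hz hgz]].
assert (hdist := hnon z t hz). rewrite hgz in hdist. nra.
Qed.

Lemma continuity_pt_reflect (f : R -> R) (x : R) :
  continuity_pt f (- x) -> continuity_pt (fun y => - f (- y)) x.
Proof.
intros hf.
apply (continuity_pt_opp (fun y => f (- y))).
apply (continuity_pt_comp Ropp f x); [|exact hf].
apply derivable_continuous_pt, derivable_pt_opp, derivable_pt_id.
Qed.

(* The distance to c never increases, so a trajectory stays on its side of c
   and moves monotonically towards it; a trajectory starting above c is
   handled by the reflection x |-> -x. *)
Lemma autonomous_cvg_to_rest_point (f g : R -> R) (a b c : R) :
  a < c < b ->
  (forall x, a < x < b -> continuity_pt f x) ->
  (forall x, a < x < c -> 0 < f x) ->
  f c = 0 ->
  (forall x, c < x < b -> f x < 0) ->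
  (forall t, 0 <= t -> derivable_pt_lim g t (f (g t))) ->
  (forall t, 0 <= t -> a < g t < b) ->
  forall eps, 0 < eps -> exists T, forall t, t >= T -> Rabs (g t - c) < eps.
Proof.
intros hc hcont hup hfc hdown hd hrange.
assert (hcontg : forall t, 0 <= t -> continuity_pt g t).
{ intros t ht. apply derivable_continuous_pt. exists (f (g t)). apply hd, ht. }
assert (hnon : forall s t, 0 <= s <= t -> (g t - c) ^ 2 <= (g s - c) ^ 2).
{ apply (sqr_dist_noninc g f a b c hd hrange).
  intros x hx. destruct (Rtotal_order x c) as [hl|[->|hg]].
  - assert (0 < f x) by (apply hup; lra). nra.
  - rewrite hfc. lra.
  - assert (f x < 0) by (apply hdown; lra). nra. }
destruct (Rle_or_lt (g 0) c) as [hbelow|habove].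
- apply (ode_cvg_from_below g f a c hd); [| |exact hfc].
  + intros t ht. split; [apply hrange, ht | apply (stays_below_of_sqr_dist_noninc g c hcontg hnon hbelow t ht)].
  + intros x hx. split; [apply hup, hx | apply hcont; lra].
- intros eps heps.
  destruct (ode_cvg_from_below (fun t => - g t) (fun x => - f (- x)) (- b) (- c))
    with (eps := eps) as [T hT]; [ | | | rewrite Ropp_involutive, hfc; ring | exact heps |].
  + intros t ht. rewrite Ropp_involutive. apply derivable_pt_lim_opp, hd, ht.
  + assert (hneg : forall t, 0 <= t -> - g t <= - c).
    { apply (stays_below_of_sqr_dist_noninc (fun t => - g t) (- c)); [ | | lra].
      - intros t ht. apply continuity_pt_opp, hcontg, ht.
      - intros s t hst. specialize (hnon s t hst). nra. }
    intros t ht. specialize (hneg t ht). specialize (hrange t ht). lra.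
  + intros x hx. split.
    * assert (f (- x) < 0) by (apply hdown; lra). lra.
    * apply continuity_pt_reflect, hcont. lra.
  + exists T. intros t ht. specialize (hT t ht).
    replace (- g t - - c) with (- (g t - c)) in hT by ring.
    rewrite Rabs_Ropp in hT. exact hT.
Qed.

Lemma continuity_pt_drho_plus (A B : R -> R) (x : R) :
  derivable A -> derivable B -> 1 < A x ^ 2 + B x ^ 2 ->
  continuity_pt (drho_plus A B) x.
Proof.
intros hA hB hx.
apply continuity_pt_filterlim, (ex_derive_continuous (V := R_NormedModule)).
unfold drho_plus, sfun.
auto_derive.
repeat split; try (apply ex_derive_Reals_1; auto); nra.
Qed.

Lemma gt_before_first_hit (g : R -> R) (c a b : R) :
  a <= b -> (forall x, a <= x <= b -> continuity_pt g x) ->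
  c < g a -> (forall x, a < x <= b -> g x <> c) -> c < g b.
Proof.
intros hab hcont ha hnohit.
destruct (Req_dec a b) as [<-|hab_ne]; [exact ha|].
apply Rnot_le_lt. intros hle.
destruct (Req_dec (g b) c) as [heq|hne]; [apply (hnohit b); [lra | exact heq]|].
destruct (IVT_interv (fun x => c - g x) a b) as [z [hz hgz]]; [ | lra | lra | lra |].
- intros x hx. apply continuity_pt_minus; [apply continuity_pt_const; intros ? ?; reflexivity | apply hcont, hx].
- apply (hnohit z); [| lra].
  destruct (Req_dec z a) as [->|]; lra.
Qed.

Lemma plus_factor_conj (a b : R) :
  1 <= a ^ 2 + b ^ 2 ->
  (b + a * sqrt (a ^ 2 + b ^ 2 - 1)) * (b - a * sqrt (a ^ 2 + b ^ 2 - 1))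
  = (1 - a ^ 2) * (a ^ 2 + b ^ 2).
Proof.
intros h. assert (hs := sqrt_sqrt (a ^ 2 + b ^ 2 - 1)).
replace ((b + a * sqrt (a ^ 2 + b ^ 2 - 1)) * (b - a * sqrt (a ^ 2 + b ^ 2 - 1)))
  with (b * b - a * a * (sqrt (a ^ 2 + b ^ 2 - 1) * sqrt (a ^ 2 + b ^ 2 - 1))) by ring.
rewrite hs by lra. ring.
Qed.

Lemma plus_factor_pos (a b : R) :
  -1 < a < 0 -> 0 < b -> 1 < a ^ 2 + b ^ 2 ->
  0 < a * sqrt (a ^ 2 + b ^ 2 - 1) + b.
Proof.
intros ha hb h.
assert (hconj := plus_factor_conj a b (Rlt_le _ _ h)).
assert (0 <= sqrt (a ^ 2 + b ^ 2 - 1)) by apply sqrt_pos.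
assert (0 < (1 - a ^ 2) * (a ^ 2 + b ^ 2)) by (apply Rmult_lt_0_compat; nra).
assert (0 < b - a * sqrt (a ^ 2 + b ^ 2 - 1)) by nra.
destruct (Rlt_or_le 0 (a * sqrt (a ^ 2 + b ^ 2 - 1) + b)); [assumption|nra].
Qed.

Lemma plus_factor_neg_of_lt_m1 (a b : R) :
  a < -1 -> 0 < b -> a * sqrt (a ^ 2 + b ^ 2 - 1) + b < 0.
Proof.
intros ha hb.
assert (hconj := plus_factor_conj a b ltac:(nra)).
assert (0 <= sqrt (a ^ 2 + b ^ 2 - 1)) by apply sqrt_pos.
assert ((1 - a ^ 2) * (a ^ 2 + b ^ 2) < 0) by (apply Rmult_neg_pos; nra).
assert (0 < b - a * sqrt (a ^ 2 + b ^ 2 - 1)) by nra.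
destruct (Rlt_or_le (a * sqrt (a ^ 2 + b ^ 2 - 1) + b) 0); [assumption|nra].
Qed.

Lemma plus_factor_neg_of_nonpos (a b : R) :
  a < 0 -> b <= 0 -> 1 < a ^ 2 + b ^ 2 ->
  a * sqrt (a ^ 2 + b ^ 2 - 1) + b < 0.
Proof.
intros ha hb h.
assert (0 < sqrt (a ^ 2 + b ^ 2 - 1)) by (apply sqrt_lt_R0; lra).
nra.
Qed.

Lemma drho_plus_factor (A B : R -> R) (r : R) :
  1 <= A r ^ 2 + B r ^ 2 ->
  drho_plus A B r
  = sfun A B r * (A r * sfun A B r + B r) / (A r ^ 2 + B r ^ 2).
Proof.
intros h. unfold drho_plus.
replace (A r ^ 2 + B r ^ 2 - 1) with (sfun A B r * sfun A B r) at 1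
  by (unfold sfun; apply sqrt_sqrt; lra).
f_equal. ring.
Qed.

Lemma drho_plus_pos (A B : R -> R) (r : R) :
  1 < A r ^ 2 + B r ^ 2 -> 0 < A r * sfun A B r + B r -> 0 < drho_plus A B r.
Proof.
intros h hq. rewrite drho_plus_factor by lra.
assert (0 < sfun A B r) by (apply sqrt_lt_R0; lra).
apply Rdiv_lt_0_compat; [apply Rmult_lt_0_compat|]; lra.
Qed.

Lemma drho_plus_neg (A B : R -> R) (r : R) :
  1 < A r ^ 2 + B r ^ 2 -> A r * sfun A B r + B r < 0 -> drho_plus A B r < 0.
Proof.
intros h hq. rewrite drho_plus_factor by lra.
assert (0 < sfun A B r) by (apply sqrt_lt_R0; lra).
unfold Rdiv. apply Rmult_neg_pos; [apply Rmult_pos_neg | apply Rinv_0_lt_compat]; lra.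
Qed.

Lemma sfun_A_m1 (A B : R -> R) (r : R) :
  A r = -1 -> 0 <= B r -> sfun A B r = B r.
Proof.
intros hA hB. unfold sfun. rewrite hA.
replace ((-1) ^ 2 + B r ^ 2 - 1) with (B r ^ 2) by ring.
apply sqrt_pow2, hB.
Qed.

Lemma drho_plus_A_m1 (A B : R -> R) (r : R) :
  A r = -1 -> 0 < B r -> drho_plus A B r = 0.
Proof.
intros hA hB. unfold drho_plus. rewrite sfun_A_m1, hA by lra. field. nra.
Qed.

Lemma dphi_plus_A_m1 (A B : R -> R) (r : R) :
  A r = -1 -> 0 < B r -> r <> 0 -> dphi_plus A B r = B r / r.
Proof.
intros hA hB hr. unfold dphi_plus. rewrite sfun_A_m1, hA by lra. field. split; nra.
Qed.

Lemma horizon_plus_of_rest_point (A B : R -> R) (rm rp c : R) :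
  rm < c < rp -> drho_plus A B c = 0 -> dphi_plus A B c <> 0 ->
  horizon_plus A B rm rp c.
Proof.
intros hc hrest hw. split; [exact hc|].
set (w := dphi_plus A B c).
exists (fun t => w * t). split.
- intros t _. rewrite hrest. split; [apply derivable_pt_lim_const|].
  pose proof (derivable_pt_lim_scal id w t 1 (derivable_pt_lim_id t)) as hlin.
  rewrite Rmult_1_r in hlin. exact hlin.
- exists (2 * PI / Rabs w).
  assert (0 < Rabs w) by (apply Rabs_pos_lt, hw).
  split; [apply Rdiv_lt_0_compat; [pose proof PI_RGT_0|]; lra|].
  replace (w * (2 * PI / Rabs w) - w * 0) with (w * / Rabs w * (2 * PI)) by (field; lra).
  rewrite Rabs_mult, Rabs_mult, Rabs_inv, Rabs_Rabsolu, (Rabs_right (2 * PI))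
    by (pose proof PI_RGT_0; lra).
  field. lra.
Qed.

Theorem mainTheorem9 (A B : R -> R) (rm rp r0 r1 r2 : R)
  (hA : derivable A) (hB : derivable B)
  (hpos : 0 < rm)
  (hord : rm < r1 /\ r1 < r0 /\ r0 < r2 /\ r2 < rp)
  (hAneg : forall r, rm <= r <= rp -> A r < 0)
  (hbm : A rm ^ 2 + B rm ^ 2 = 1)
  (hbp : A rp ^ 2 + B rp ^ 2 = 1)
  (herg : forall r, rm < r < rp -> A r ^ 2 + B r ^ 2 > 1)
  (hA1 : forall r, rm < r < rp -> (A r = -1 <-> (r = r1 \/ r = r2)))
  (hA12 : forall r, r1 < r < r2 -> A r < -1)
  (hBpos : forall r, rm <= r < r0 -> B r > 0)
  (hB0 : B r0 = 0)
  (hBneg : forall r, r0 < r <= rp -> B r < 0) :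
  (forall r, rm < r < r1 -> drho_plus A B r > 0) /\
  (forall r, r1 < r < rp -> drho_plus A B r < 0) /\
  (dphi_plus A B r1 = B r1 / r1 /\ B r1 / r1 > 0) /\
  horizon_plus A B rm rp r1 /\
  (forall rho phi : R -> R,
     plus_traj_on A B (fun t => 0 <= t) rho phi ->
     (forall t, 0 <= t -> rm < rho t < rp) ->
     forall eps, eps > 0 -> exists T, forall t, t >= T -> Rabs (rho t - r1) < eps).
Proof.
destruct hord as (hm1 & h10 & h02 & h2p).
assert (hAr1 : A r1 = -1) by (apply hA1; lra).
assert (hBr1 : 0 < B r1) by (apply hBpos; lra).
assert (hAgt : forall r, rm < r < r1 -> -1 < A r).
{ intros r hr. apply (gt_before_first_hit A (-1) rm r); [lra | | |].
  - intros x _. apply derivable_continuous_pt, hA.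
  - assert (0 < B rm) by (apply hBpos; lra). assert (A rm < 0) by (apply hAneg; lra). nra.
  - intros x hx hx1. apply hA1 in hx1; lra. }
assert (hinner : forall r, rm < r < r1 -> drho_plus A B r > 0).
{ intros r hr. apply drho_plus_pos; [apply herg; lra|].
  apply plus_factor_pos; [split; [apply hAgt | apply hAneg]; lra | apply hBpos; lra | apply herg; lra]. }
assert (houter : forall r, r1 < r < rp -> drho_plus A B r < 0).
{ intros r hr. apply drho_plus_neg; [apply herg; lra|].
  destruct (Rlt_or_le r r0) as [hr0|hr0].
  - apply plus_factor_neg_of_lt_m1; [apply hA12 | apply hBpos]; lra.
  - apply plus_factor_neg_of_nonpos; [apply hAneg; lra | | apply herg; lra].
    destruct (Req_dec r r0) as [->|hne]; [lra | apply Rlt_le, hBneg; lra]. }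
assert (hrest : drho_plus A B r1 = 0) by (apply drho_plus_A_m1; assumption).
assert (hdphi : dphi_plus A B r1 = B r1 / r1) by (apply dphi_plus_A_m1; [assumption | assumption | lra]).
assert (hw : B r1 / r1 > 0) by (apply Rdiv_lt_0_compat; lra).
split; [exact hinner|]. split; [exact houter|]. split; [split; assumption|]. split.
- apply horizon_plus_of_rest_point; [lra | exact hrest | lra].
- intros rho phi htraj hrange.
  apply (autonomous_cvg_to_rest_point (drho_plus A B) rho rm rp r1); try assumption; [lra | |].
  + intros x hx. apply continuity_pt_drho_plus; [assumption | assumption | apply herg, hx].
  + intros t ht. apply htraj, ht.
Qed.
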